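(* Let $\mathfrak R$ be an iterated graph system satisfying (GR1)–(GR3), with replacement graphs $G_m$. Every path in a replacement graph containing at most two distinct vertices, and every non-collapsing path, is an intersection path. Moreover, if $\theta$ is an intersection path in $G_m$ and $\{\theta_n\}_{n\in\mathbb N}$ is a sequence of paths witnessing this (as in the definition of intersection path), then $\theta_n$ is non-collapsing for all sufficiently large $n\in\mathbb N$. In particular, $\mathfrak R$ is of bounded geometry if and only if \[ \sup_\theta\operatorname{diam}(\theta)<\infty, \] where the supremum is over all non-collapsing paths $\theta$ in all replacement graphs $G_n$, and $\operatorname{diam}(\theta)$ is the diameter of the vertex set of $\theta$ with respect to $d_{G_n}$.
   Context: Graphs: $(V,E)$, $V$ finite non-empty, $E\subseteq V\times V$, $(x,y)\in E\Rightarrow(y,x)\notin E$; $\{x,y\}\in E$ means either orientation. A path is a sequence $[x_1,\dots,x_k]$ ($k\ge1$, repetitions allowed) with $\{x_i,x_{i+1}\}\in E$; its length is $k-1$; $d_G$ is the shortest-path metric. An iterated graph system (IGS) consists of a connected graph $G_1=(S,E)$, a finite set $\mathcal T$ of types, a surjective typing $\mathfrak t:E\to\mathcal T$ and non-empty gluing rules $I_t\subseteq S\times S$. With $W_m=S^m$, $W_\#=\bigcup_{m\ge1} W_m$, $[w]_k=w_1\cdots w_k$ and $|w\wedge v|=\min\{k:[w]_k\neq[v]_k\}$ for distinct words of equal length, the replacement graphs $G_m=(W_m,E_m)$ are defined recursively: $(w,v)\in E_{m+1}$ iff either (1) $[w]_m=[v]_m$ and $(w_{m+1},v_{m+1})\in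 E$ (type $\mathfrak t(w_{m+1},v_{m+1})$), or (2) $([w]_m,[v]_m)\in E_m$ and $(w_{m+1},v_{m+1})\in I_{\mathfrak t([w]_m,[v]_m)}$ (type $\mathfrak t([w]_m,[v]_m)$). (GR1)–(GR3): with $I_{t,+}$, $I_{t,-}$ the first, resp. second, coordinates of $I_t$: (GR1) each $w\in S$ has at most one $v$ with $(w,v)\in I_t$ and at most one $v$ with $(v,w)\in I_t$; (GR2) for each $t$ and $w$, $w$ cannot both have some $v$ with $(w,v)\in I_t$ and an outgoing edge of $G_1$ of type $t$, and cannot both have some $v$ with $(v,w)\in I_t$ and an incoming edge of $G_1$ of type $t$; (GR3) $I_{t,-}\cap I_{t,+}=\emptyset$. For $n\ge k$, $\pi_{n,k}:W_n\to W_k$, $w\mapsto[w]_k$; it maps paths of $G_n$ to paths of $G_k$ by applying it to each vertex and deleting consecutive repetitions. A path $\theta$ in $G_m$ is an intersection path if there are paths $\theta_n$ in $G_n$ for all $n\in\mathbb N$ with $\theta_m=\theta$, $\pi_{n,k}(\theta_n)=\theta_k$ for all $n>k$, and $\lim_{n\to\infty}\operatorname{len}(\theta_n)<\infty$. The fundamental neighbourhood of $w\in W_\#$ is $\mathcal N(w)=\{v\in W_{|w|}:$ there is an intersection path from $w$ to $v\}$; $\mathfrak R$ is of bounded geometry if $\sup_{w\in W_\#}\operatorname{diam}(\mathcal N(w))<\infty$ (diameter in $d_{G_{|w|}}$). For $n>1$, a path $[w^{(1)},\dots,w^{(k)}]$ in $G_n$ is non-collapsing if $|w^{(i)}\wedge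 w^{(i+1)}|<n$ for all $i=1,\dots,k-1$. *)

From mathcomp Require Import all_boot.
Set Implicit Arguments. Unset Strict Implicit. Unset Printing Implicit Defensive.

(* An iterated graph system is given by
   - a finite vertex type S (the vertex set of G_1) and an edge relation E on S,
   - a finite type T of types, a typing tp (only meaningful on edges of E),
   - gluing rules I t, a relation on S for each type t.
   Words of length m are sequences w : seq S with size w = m; the i-th letter
   w_i is nth _ w (i-1), so [w]_k = take k w. *)

Section IGS.
Variables (S T : finType) (E : rel S) (tp : S -> S -> T) (I : T -> rel S).

Definition is_IGS : Prop :=
  [/\ (exists x : S, True),
      (forall x y, E x y -> ~~ E y x),
      (forall x y, connect (fun a b => E a b || E b a) x y),
      (forall t : T, exists x y, E x y /\ tp x y = t)
    & (forall t : T, exists x y, I t x y)].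

Definition GR1 : Prop :=
  forall t w v v', (I t w v -> I t w v' -> v = v') /\ (I t v w -> I t v' w -> v = v').

Definition GR2 : Prop :=
  forall t w,
    ~ ((exists v, I t w v) /\ (exists u, E w u /\ tp w u = t)) /\
    ~ ((exists v, I t v w) /\ (exists u, E u w /\ tp u w = t)).

Definition GR3 : Prop :=
  forall t x, ~ ((exists y, I t y x) /\ (exists y, I t x y)).

(* edge_type n w v = Some t iff (w,v) is an (oriented) edge of G_{n+1} of type t *)
Fixpoint edge_type (n : nat) (w v : seq S) : option T :=
  match n with
  | 0 => match w, v with
         | [:: a], [:: b] => if E a b then Some (tp a b) else None
         | _, _ => None
         end
  | n'.+1 =>
      match w, v with
      | a :: _, b :: _ =>
        if (size w == n.+1) && (size v == n.+1) then
          let x := last a w in let y := last b v in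
          let w' := take n w in let v' := take n v in
          if (w' == v') && E x y then Some (tp x y)
          else match edge_type n' w' v' with
               | Some t => if I t x y then Some t else None
               | None => None
               end
        else None
      | _, _ => None
      end
  end.

Definition Edge (m : nat) (w v : seq S) : bool :=
  match m with
  | 0 => false
  | m'.+1 => if edge_type m' w v is Some _ then true else false
  end.

Definition adj (m : nat) (w v : seq S) : bool := Edge m w v || Edge m v w.

Definition is_path (m : nat) (p : seq (seq S)) : bool :=
  [&& p != [::], all (fun w => size w == m) p & sorted (adj m) p].

Definition len (p : seq (seq S)) : nat := (size p).-1.

Definition squash (p : seq (seq S)) : seq (seq S) :=
  foldr (fun x acc => match acc with
                      | y :: _ => if x == y then acc else x :: acc
                      | [::] => [:: x]
                      end) [::] p.

Definition proj (k : nat) (p : seq (seq S)) : seq (seq S) :=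
  squash (map (take k) p).

Definition intersection_witness (m : nat) (theta : seq (seq S))
  (thetas : nat -> seq (seq S)) : Prop :=
  [/\ forall n, 0 < n -> is_path n (thetas n),
      thetas m = theta,
      forall n k, 0 < k -> k < n -> proj k (thetas n) = thetas k
    & exists L N, forall n, N <= n -> len (thetas n) = L].

Definition intersection_path (m : nat) (theta : seq (seq S)) : Prop :=
  is_path m theta /\ exists thetas, intersection_witness m theta thetas.

Definition fund_nbhd (w : seq S) (v : seq S) : Prop :=
  size v = size w /\
  exists theta, intersection_path (size w) theta /\
                head [::] theta = w /\ last [::] theta = v.

Definition dist_le (m : nat) (x y : seq S) (k : nat) : Prop :=
  exists p, is_path m p /\ head [::] p = x /\ last [::] p = y /\ len p <= k.

Definition bounded_geometry : Prop :=
  exists D, forall w, 0 < size w ->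
    forall v1 v2, fund_nbhd w v1 -> fund_nbhd w v2 -> dist_le (size w) v1 v2 D.

Definition wedge (w v : seq S) : nat :=
  find (fun k => take k w != take k v) (iota 0 (size w).+1).

Definition non_collapsing (n : nat) (p : seq (seq S)) : bool :=
  [&& 1 < n, is_path n p & sorted (fun w v => wedge w v < n) p].

End IGS.

From mathcomp Require Import all_boot zify.
Set Implicit Arguments. Unset Strict Implicit. Unset Printing Implicit Defensive.

(* If (w, v) is an edge of type t of G_m and (a, b) is in I_t, then (w a^k, v b^k)
   is an edge of type t of G_(m+k) for every k.  Hence a path of G_m whose consecutive
   vertices can be padded in this way lifts to paths of all deeper levels with the
   same length, whose truncations are its projections: it is an intersection
   path.  Paths on two vertices w, v pad with any pair of I_t (I_t is non-empty); a
   non-collapsing path pads every vertex by repeating its last letter, since its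
   edges are glued at the last level.  Conversely, once the lengths of a witnessing
   sequence stabilise, projecting theta_(n+1) to G_n removes no vertex, so
   consecutive vertices of theta_(n+1) differ in their first n letters.  The
   bounded-geometry criterion follows by projecting distances in G_n down to G_m. *)

Section Squash.
Variable S : finType.
Implicit Types (x y : seq S) (s p : seq (seq S)).

Lemma squash_cons x s : squash (x :: s) =
  if squash s is y :: _ then (if x == y then squash s else x :: squash s) else [:: x].
Proof. by []. Qed.

Lemma squash_consP x s : exists t, squash (x :: s) = x :: t.
Proof.
elim: s x => [|y s IH] x; first by exists [::].
by rewrite squash_cons; case: (IH y) => t ->; case: eqP => [->|_]; eexists.
Qed.

Lemma squash_cons2 x y s :
  squash [:: x, y & s] = if x == y then squash (y :: s) else x :: squash (y :: s).
Proof. by rewrite squash_cons; case: (squash_consP y s) => t ->. Qed.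

Lemma squash_nil_eq s : (squash s == [::]) = (s == [::]).
Proof. by case: s => [|x s] //; case: (squash_consP x s) => t ->. Qed.

Lemma head_squash s : head [::] (squash s) = head [::] s.
Proof. by case: s => [|x s] //; case: (squash_consP x s) => t ->. Qed.

Lemma last_squash s : last [::] (squash s) = last [::] s.
Proof.
elim: s => [|x [|y s] IH] //; rewrite squash_cons2; case: eqP => _ //.
by case: (squash_consP y s) IH => t eq_t; rewrite eq_t /= => ->.
Qed.

Lemma mem_squash s : {subset squash s <= s}.
Proof.
elim: s => [|x [|y s] IH] // z; rewrite squash_cons2.
case: eqP => _; first by move/IH => z_ys; rewrite inE z_ys orbT.
by rewrite inE => /orP[/eqP->|/IH z_ys]; rewrite inE ?eqxx // z_ys orbT.
Qed.

Lemma size_squash s : size (squash s) <= size s.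
Proof.
elim: s => [|x [|y s] IH] //; rewrite squash_cons2.
by case: eqP => _ /=; [exact: leqW | rewrite ltnS].
Qed.

Lemma squash_sorted (r : rel (seq S)) s :
  sorted (fun x y => (x == y) || r x y) s -> sorted r (squash s).
Proof.
elim: s => [|x [|y s] IH] // /andP[rxy sy]; rewrite squash_cons2.
case: eqP rxy => [_ _|_ rxy]; first exact: IH.
by case: (squash_consP y s) (IH sy) => t eq_t; rewrite eq_t /= => ->; rewrite andbT.
Qed.

Lemma squash_id s : sorted (fun x y => x != y) s -> squash s = s.
Proof.
elim: s => [|x [|y s] IH] // /andP[neq sy].
by rewrite squash_cons2 (negbTE neq) IH.
Qed.

Lemma size_squash_eq s : size (squash s) = size s -> sorted (fun x y => x != y) s.
Proof.
elim: s => [|x [|y s] IH] //; rewrite squash_cons2.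
case: eqP => [_ eq_size|/eqP neq [/IH sy]]; last exact/andP.
by have := size_squash (y :: s); rewrite eq_size /= ltnn.
Qed.

Lemma squash_map_squash (f : seq S -> seq S) s :
  squash (map f (squash s)) = squash (map f s).
Proof.
elim: s => [|x [|y s] IH] //; rewrite squash_cons2.
case: eqP => [->|_]; first by rewrite IH [in RHS]map_cons squash_cons2 eqxx.
case: (squash_consP y s) IH => t -> IH.
by rewrite map_cons squash_cons IH.
Qed.

End Squash.

Section Projection.
Variable S : finType.
Implicit Types (x y : seq S) (p : seq (seq S)).

Lemma proj_proj k n p : k <= n -> proj k (proj n p) = proj k p.
Proof.
move=> kn; rewrite /proj squash_map_squash -map_comp.
by congr squash; apply: eq_map => x /=; rewrite take_takel.
Qed.

Lemma proj_id k p : all (fun x => size x == k) p -> sorted (fun x y => x != y) p ->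
  proj k p = p.
Proof.
move=> /allP size_k /squash_id {2}<-; rewrite /proj; congr squash.
by rewrite -[RHS]map_id; apply/eq_in_map => x /size_k /eqP <-; rewrite take_size.
Qed.

Lemma head_proj k p : head [::] (proj k p) = take k (head [::] p).
Proof. by rewrite /proj head_squash; case: p. Qed.

Lemma last_proj k p : last [::] (proj k p) = take k (last [::] p).
Proof.
have take_nil : take k [::] = [::] :> seq S by case: k.
by rewrite /proj last_squash -{1}take_nil last_map.
Qed.

Lemma len_proj k p : len (proj k p) <= len p.
Proof. by rewrite /len -(size_map (take k) p) -!subn1 leq_sub2r ?size_squash. Qed.

Lemma size_proj_eq k p : size (proj k p) = size p ->
  sorted (fun x y => take k x != take k y) p.
Proof. by rewrite -(size_map (take k) p) => /size_squash_eq; rewrite sorted_map. Qed.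

Lemma wedge_leqE n x y : n <= size x -> (wedge x y <= n) = (take n x != take n y).
Proof.
rewrite /wedge => n_x; set a := fun k => take k x != take k y.
apply/idP/idP => [le_n|neq_n].
  have has_a : has a (iota 0 (size x).+1) by rewrite has_find size_iota ltnS (leq_trans le_n).
  have := nth_find 0 has_a; rewrite nth_iota ?ltnS ?(leq_trans le_n) // /a add0n.
  by apply: contraNN => /eqP eq_n; rewrite -(take_takel x le_n) eq_n take_takel.
rewrite leqNgt; apply/negP => /(before_find 0).
by rewrite nth_iota ?ltnS // add0n /a neq_n.
Qed.

End Projection.

Section ReplacementGraphs.
Variables (S T : finType) (E : rel S) (tp : S -> S -> T) (I : T -> rel S).
Hypothesis E_antisym : forall x y, E x y -> ~~ E y x.
Hypothesis I_nonempty : forall t, exists a b, I t a b.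
Implicit Types (x y w v : seq S) (p theta : seq (seq S)).

Local Notation et := (edge_type E tp I).
Local Notation Edge := (Edge E tp I).
Local Notation adj := (adj E tp I).
Local Notation is_path := (is_path E tp I).

Lemma E_irrefl a : E a a = false.
Proof. by apply/negP => Eaa; have := E_antisym Eaa; rewrite Eaa. Qed.

Lemma edge_type_refl n w : et n w w = None.
Proof.
elim: n w => [|n IH] [|a w] //=; first by case: w => //; rewrite E_irrefl.
by case: ifP => // _; rewrite eqxx E_irrefl /= IH.
Qed.

Lemma edge_type_size n w v t : et n w v = Some t -> size w = n.+1 /\ size v = n.+1.
Proof.
case: n => [|n]; first by case: w => [|a [|]]; case: v => [|b [|]].
by case: w => [|a w]; case: v => [|b v] //=; case: ifP => // /andP[/eqP -> /eqP ->].
Qed.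

Lemma edge_typeS n w v d : et n.+1 w v =
  if (size w == n.+2) && (size v == n.+2) then
    if (take n.+1 w == take n.+1 v) && E (last d w) (last d v)
    then Some (tp (last d w) (last d v))
    else if et n (take n.+1 w) (take n.+1 v) is Some t
         then (if I t (last d w) (last d v) then Some t else None)
         else None
  else None.
Proof. by case: w => [|a w]; case: v => [|b v] //=; rewrite andbF. Qed.

Lemma edge_type_rcons n w v t a b : et n w v = Some t -> I t a b ->
  et n.+1 (rcons w a) (rcons v b) = Some t.
Proof.
move=> et_wv Iab; have [size_w size_v] := edge_type_size et_wv.
rewrite (edge_typeS _ _ _ a) !size_rcons size_w size_v !eqxx !last_rcons.
rewrite -!cats1 !takel_cat ?size_w ?size_v // !take_oversize ?size_w ?size_v //.
have /negbTE -> : w != v by apply/eqP => eq_wv; rewrite eq_wv edge_type_refl in et_wv.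
by rewrite et_wv Iab.
Qed.

Lemma edge_type_cat_nseq n w v t a b k : et n w v = Some t -> I t a b ->
  et (n + k) (w ++ nseq k a) (v ++ nseq k b) = Some t.
Proof.
move=> et_wv Iab; elim: k => [|k IH]; first by rewrite addn0 !cats0.
by rewrite addnS -[k.+1]addn1 !nseqD !catA !cats1 (edge_type_rcons IH).
Qed.

Lemma edge_type_take n w v t : et n.+1 w v = Some t ->
  (take n.+1 w == take n.+1 v) || (et n (take n.+1 w) (take n.+1 v) != None).
Proof.
case: w => [|d w] //; rewrite (edge_typeS _ _ _ d); case: ifP => // _.
by case: eqP => //= _; case: (et n _ _).
Qed.

Lemma edge_type_glued n w v t d : et n.+1 w v = Some t ->
  take n.+1 w != take n.+1 v -> I t (last d w) (last d v).
Proof.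
rewrite (edge_typeS _ _ _ d); case: ifP => // _ + /negbTE neq; rewrite neq /=.
by case: (et n _ _) => // t'; case: ifP => // + [<-].
Qed.

Lemma adjC m w v : adj m w v = adj m v w.
Proof. by rewrite /adj orbC. Qed.

Lemma adj_irr m w : adj m w w = false.
Proof. by case: m => [|m] //; rewrite /adj /Edge edge_type_refl. Qed.

Lemma adj_neq m w v : adj m w v -> w != v.
Proof. by apply: contraTneq => ->; rewrite adj_irr. Qed.

Lemma adj_size m w v : adj m w v -> size w = m /\ size v = m.
Proof.
case: m => [|m] //; rewrite /adj /Edge.
by case/orP; case et_wv: (et m _ _) => [t|] // _; case: (edge_type_size et_wv) => -> ->.
Qed.

Lemma adj_take_pred n w v : adj n.+2 w v ->
  (take n.+1 w == take n.+1 v) || adj n.+1 (take n.+1 w) (take n.+1 v).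
Proof.
rewrite /adj /Edge.
case/orP; case et_wv: (et n.+1 _ _) => [t|] // _; have := edge_type_take et_wv.
  by case/orP => [-> //|]; case: (et n _ _); rewrite ?orbT.
by rewrite eq_sym; case/orP => [-> //|]; case: (et n _ _); rewrite ?orbT.
Qed.

Lemma adj_take n k w v : 0 < k <= n -> adj n w v ->
  (take k w == take k v) || adj k (take k w) (take k v).
Proof.
elim: n w v => [|n IH] w v /andP[k_gt0]; first by rewrite leqNgt k_gt0.
rewrite leq_eqVlt ltnS => /orP[/eqP-> adj_wv | k_le adj_wv].
  have [size_w size_v] := adj_size adj_wv.
  by rewrite !take_oversize ?size_w ?size_v // adj_wv orbT.
case: n IH k_le adj_wv => [|n] IH k_le adj_wv; first by rewrite leqNgt k_gt0 in k_le.
case/orP: (adj_take_pred adj_wv) => [/eqP eq_wv|adj_pred].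
  by rewrite -(take_takel w k_le) -(take_takel v k_le) eq_wv eqxx.
by have := IH _ _ _ adj_pred; rewrite !take_takel // k_gt0 k_le; apply.
Qed.

Lemma proj_path n k p : 0 < k <= n -> is_path n p -> is_path k (proj k p).
Proof.
move=> k_bounds /and3P[p_nil /allP size_p adj_p]; apply/and3P; split.
- by rewrite squash_nil_eq; case: p p_nil {size_p adj_p}.
- apply/allP => x /mem_squash /mapP [y /size_p /eqP size_y ->].
  by rewrite size_takel // size_y; case/andP: k_bounds.
- apply: squash_sorted; rewrite sorted_map.
  by apply: sub_sorted adj_p => x y; apply: adj_take.
Qed.

Lemma proj_path_id n p : is_path n p -> proj n p = p.
Proof.
case/and3P=> _ size_p adj_p; apply: proj_id => //.
by apply: sub_sorted adj_p => x y; apply: adj_neq.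
Qed.

Lemma path_head_mem n p : is_path n p -> head [::] p \in p.
Proof. by case/and3P; case: p => // x p _ _ _; apply: mem_head. Qed.

Lemma path_last_mem n p : is_path n p -> last [::] p \in p.
Proof. by case/and3P; case: p => // x p _ _ _; exact: (mem_last x p). Qed.

Lemma size_path_head n p : is_path n p -> size (head [::] p) = n.
Proof.
move=> p_path; have /and3P[_ /allP size_p _] := p_path.
exact/eqP/size_p/(path_head_mem p_path).
Qed.

Lemma adj_cat_nseq_glued n w v t a b k : et n w v = Some t -> I t a b ->
  adj (n.+1 + k) (w ++ nseq k a) (v ++ nseq k b).
Proof. by move=> et_wv Iab; rewrite /adj /Edge addSn (edge_type_cat_nseq k et_wv Iab). Qed.

Definition pad (c : seq S -> S) k w := w ++ nseq k (c w).

Lemma intersection_path_pad m theta c : is_path m theta ->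
  (forall k, sorted (fun x y => adj (m + k) (pad c k x) (pad c k y)) theta) ->
  intersection_path E tp I m theta.
Proof.
move=> theta_path pad_adj; split => //.
have /and3P[theta_nil /allP size_theta _] := theta_path.
have size_m x : x \in theta -> size x = m by move/size_theta/eqP.
pose X n := map (pad c (n - m)) theta.
have X_path n : is_path (maxn n m) (X n).
  rewrite maxnC maxnE; apply/and3P; split; first by rewrite /X; case: (theta) theta_nil.
    by apply/allP => _ /mapP[x /size_m x_m ->]; rewrite size_cat size_nseq x_m.
  by rewrite sorted_map; apply: pad_adj.
have take_X k n : k <= n -> map (take k) (X n) = map (take k) (X k).
  move=> kn; rewrite -!map_comp; apply/eq_in_map => x /size_m x_m /=.
  rewrite /pad !take_cat x_m; case: ltnP => // mk.
  by rewrite !take_nseq // leq_sub2r.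
exists (fun n => proj n (X n)); split.
- by move=> n n_gt0; apply: proj_path (X_path n); rewrite n_gt0 leq_maxl.
- rewrite /X subnn (@eq_map _ _ _ id) ?map_id ?proj_path_id //.
  by move=> x; rewrite /pad cats0.
- by move=> n k _ /ltnW kn; rewrite proj_proj // /proj take_X.
- exists (len theta), m => n mn.
  by have := X_path n; rewrite (maxn_idPl mn) => /proj_path_id ->; rewrite /len size_map.
Qed.

Lemma adj_cat_nseq_exists m w v : adj m w v ->
  exists a b, forall k, adj (m + k) (w ++ nseq k a) (v ++ nseq k b).
Proof.
case: m => [|n] // /orP[]; rewrite /Edge; case et_wv: (et n _ _) => [t|] // _;
  have [a [b Iab]] := I_nonempty t.
  by exists a, b => k; apply: adj_cat_nseq_glued et_wv Iab.
by exists b, a => k; rewrite adjC; apply: adj_cat_nseq_glued et_wv Iab.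
Qed.

Lemma intersection_path_two_vertices (d : S) m theta : is_path m theta ->
  size (undup theta) <= 2 -> intersection_path E tp I m theta.
Proof.
move=> theta_path undup_le2.
case: theta theta_path undup_le2 => [|w [|v rest]] theta_path undup_le2.
- by case/and3P: theta_path.
- by apply: (@intersection_path_pad _ _ (fun => d)).
have adj_wv : adj m w v by case/and3P: theta_path => _ _ /andP[].
have neq_wv := adj_neq adj_wv.
have w_or_v z : z \in [:: w, v & rest] -> (z == w) || (z == v).
  move=> z_theta; apply/negPn/negP; rewrite negb_or => /andP[neq_zw neq_zv].
  suff : 3 <= size (undup [:: w, v & rest]) by rewrite leqNgt ltnS undup_le2.
  apply: (@uniq_leq_size _ [:: w; v; z]) => [|u].
    by rewrite /= !inE negb_or neq_wv eq_sym neq_zw eq_sym neq_zv.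
  by rewrite mem_undup !inE => /or3P[] /eqP->; rewrite ?z_theta ?inE ?eqxx ?orbT.
have [a [b adj_ab]] := adj_cat_nseq_exists adj_wv.
apply: (@intersection_path_pad _ _ (fun z => if z == w then a else b)) => // k.
case/and3P: theta_path => _ _ adj_theta.
apply: (sub_in_sorted (P := fun z => z \in [:: w, v & rest])) (allss _) adj_theta.
move=> x y /w_or_v/orP[]/eqP-> /w_or_v/orP[]/eqP->; rewrite ?adj_irr // => _.
  by rewrite /pad eqxx eq_sym (negbTE neq_wv); apply: adj_ab.
by rewrite /pad eqxx eq_sym (negbTE neq_wv) adjC; apply: adj_ab.
Qed.

Lemma adj_pad_last (d : S) n x y : adj n.+2 x y -> take n.+1 x != take n.+1 y ->
  forall k, adj (n.+2 + k) (pad (last d) k x) (pad (last d) k y).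
Proof.
move=> /orP[] + neq_xy k; rewrite /Edge; case et_xy: (et n.+1 _ _) => [t|] // _.
  exact: adj_cat_nseq_glued et_xy (edge_type_glued d et_xy neq_xy).
rewrite eq_sym in neq_xy; rewrite adjC.
exact: adj_cat_nseq_glued et_xy (edge_type_glued d et_xy neq_xy).
Qed.

Lemma intersection_path_non_collapsing (d : S) n theta :
  non_collapsing E tp I n theta -> intersection_path E tp I n theta.
Proof.
case: n => [|[|n]] /and3P[// _ theta_path wedge_theta].
apply: (@intersection_path_pad _ _ (last d)) => // k.
have /and3P[_ size_theta adj_theta] := theta_path.
have adj_wedge : sorted [rel x y | adj n.+2 x y && (wedge x y < n.+2)] theta.
  by rewrite sorted_relI adj_theta.
apply: (sub_in_sorted (P := fun w => size w == n.+2)) size_theta adj_wedge.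
move=> x y /eqP size_x _ /andP[adj_xy]; rewrite ltnS wedge_leqE ?size_x //.
by move/(adj_pad_last d adj_xy); apply.
Qed.

Lemma size_path n p : is_path n p -> size p = (len p).+1.
Proof. by case/and3P; case: p. Qed.

Lemma intersection_witness_non_collapsing m theta thetas :
  intersection_witness E tp I m theta thetas ->
  exists N, forall n, N <= n -> non_collapsing E tp I n (thetas n).
Proof.
case=> thetas_path _ thetas_proj [L [N len_L]]; exists N.+2 => -[|[|n]] // N_le.
have proj_n := thetas_proj n.+2 n.+1 isT (ltnSn _).
have size_proj : size (proj n.+1 (thetas n.+2)) = size (thetas n.+2).
  rewrite proj_n (size_path (thetas_path n.+1 isT)) (size_path (thetas_path n.+2 isT)).
  by rewrite !len_L //; lia.
have /and3P[_ size_theta _] := thetas_path n.+2 isT.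
apply/and3P; split=> //; first exact: thetas_path.
apply: (sub_in_sorted (P := fun w => size w == n.+2)) size_theta (size_proj_eq size_proj).
by move=> x y /eqP size_x _; rewrite ltnS wedge_leqE ?size_x.
Qed.

Lemma non_collapsing_take n i theta : 0 < i ->
  non_collapsing E tp I n theta -> non_collapsing E tp I n (take i theta).
Proof.
move=> i_gt0 /and3P[n_gt1 /and3P[theta_nil /allP size_theta adj_theta] wedge_theta].
apply/and3P; split; rewrite ?take_sorted //; apply/and3P; split; rewrite ?take_sorted //.
  by case: (theta) i_gt0 theta_nil; case: i.
by apply/allP => x /mem_take /size_theta.
Qed.

Lemma fund_nbhd_non_collapsing (d : S) n theta x :
  non_collapsing E tp I n theta -> x \in theta -> fund_nbhd E tp I (head [::] theta) x.
Proof.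
move=> theta_nc x_theta; have /and3P[_ theta_path _] := theta_nc.
have /and3P[_ /allP size_theta _] := theta_path.
split; first by rewrite (size_path_head theta_path); apply/eqP/size_theta.
have x_index : index x theta < size theta by rewrite index_mem.
exists (take (index x theta).+1 theta); split; [|split].
- rewrite (size_path_head theta_path); apply: (intersection_path_non_collapsing d).
  exact: non_collapsing_take.
- by case/and3P: theta_path; case: (theta).
- by rewrite -nth_last size_takel // nth_take // nth_index.
Qed.

Lemma dist_le_sym m x y D : dist_le E tp I m x y D -> dist_le E tp I m y x D.
Proof.
case=> p [/and3P[p_nil size_p adj_p] [head_p [last_p len_p]]].
exists (rev p); split; [|split; [|split]].
- apply/and3P; split; rewrite ?all_rev //; first by rewrite -size_eq0 size_rev size_eq0.
  by rewrite rev_sorted; apply: sub_sorted adj_p => ? ?; rewrite adjC.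
- case/lastP: p p_nil last_p {size_p adj_p head_p len_p} => // q z _.
  by rewrite rev_rcons last_rcons.
- case: p p_nil head_p {size_p adj_p last_p len_p} => // z q _.
  by rewrite rev_cons last_rcons.
- by rewrite /len size_rev.
Qed.

Lemma dist_le_trans m x y z a b :
  dist_le E tp I m x y a -> dist_le E tp I m y z b -> dist_le E tp I m x z (a + b).
Proof.
case=> [[|x1 p1]] [/and3P[// _ size_p1 adj_p1] [/= <- [/= last_p1 len_p1]]].
case=> [[|y1 p2]] [/and3P[// _ size_p2 adj_p2] [/= head_p2 [/= last_p2 len_p2]]].
exists (x1 :: p1 ++ p2); split; [|split; [|split]] => //.
- apply/and3P; split=> //.
    by rewrite /= all_cat; move: size_p1 size_p2 => /= /andP[-> ->] /andP[_ ->].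
  by rewrite /= cat_path last_p1 -head_p2; apply/andP.
- by rewrite /= last_cat last_p1 -head_p2.
- by move: len_p1 len_p2; rewrite /len /= size_cat; lia.
Qed.

Lemma dist_le_take n k x y D : 0 < k <= n ->
  dist_le E tp I n x y D -> dist_le E tp I k (take k x) (take k y) D.
Proof.
move=> k_bounds [p [p_path [head_p [last_p len_p]]]].
exists (proj k p); split; first exact: proj_path p_path.
by rewrite head_proj last_proj head_p last_p (leq_trans (len_proj k p)).
Qed.

Lemma fund_nbhd_dist_le D w v :
  (forall n theta, non_collapsing E tp I n theta ->
     forall x y, x \in theta -> y \in theta -> dist_le E tp I n x y D) ->
  0 < size w -> fund_nbhd E tp I w v -> dist_le E tp I (size w) w v D.
Proof.
move=> nc_bounded w_gt0 [_ [theta [[_ [thetas witness]] [head_theta <-]]]].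
have [N thetas_nc] := intersection_witness_non_collapsing witness.
set n := maxn N (size w).+1.
have w_lt : size w < n by rewrite leq_max ltnSn orbT.
have /thetas_nc thetas_n_nc : N <= n by apply: leq_maxl.
have proj_n : proj (size w) (thetas n) = theta.
  by case: witness => _ <- thetas_proj _; apply: thetas_proj.
rewrite -[w in dist_le _ _ _ _ w]head_theta -proj_n head_proj last_proj.
apply: dist_le_take (nc_bounded _ _ thetas_n_nc _ _ _ _).
- by rewrite w_gt0 ltnW.
- by case/and3P: thetas_n_nc => _ /path_head_mem.
- by case/and3P: thetas_n_nc => _ /path_last_mem.
Qed.

End ReplacementGraphs.

Theorem lemma5p3 (S T : finType) (E : rel S) (tp : S -> S -> T) (I : T -> rel S)
  (hIGS : is_IGS E tp I) (hGR1 : GR1 I) (hGR2 : GR2 E tp I) (hGR3 : GR3 I) :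
  [/\ (forall m theta, 0 < m -> is_path E tp I m theta ->
         size (undup theta) <= 2 -> intersection_path E tp I m theta),
      (forall m theta, non_collapsing E tp I m theta ->
         intersection_path E tp I m theta),
      (forall m theta thetas, 0 < m -> is_path E tp I m theta ->
         intersection_witness E tp I m theta thetas ->
         exists N, forall n, N <= n -> non_collapsing E tp I n (thetas n))
    & (bounded_geometry E tp I <->
       exists D, forall n theta, non_collapsing E tp I n theta ->
         forall x y, x \in theta -> y \in theta -> dist_le E tp I n x y D)].
Proof.
case: hIGS => [[d _] E_antisym _ _ I_nonempty]; split.
- by move=> m theta _; apply: intersection_path_two_vertices.
- by move=> m theta; apply: intersection_path_non_collapsing.
- by move=> m theta thetas _ _; apply: intersection_witness_non_collapsing.
split=> [[D bounded] | [D nc_bounded]].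
- exists D => n theta theta_nc x y x_theta y_theta.
  have /and3P[n_gt1 theta_path _] := theta_nc.
  rewrite -(size_path_head theta_path); apply: bounded.
  + by rewrite (size_path_head theta_path) ltnW.
  + exact: fund_nbhd_non_collapsing theta_nc x_theta.
  + exact: fund_nbhd_non_collapsing theta_nc y_theta.
- exists (D + D) => w w_gt0 v1 v2 v1_w v2_w.
  apply: dist_le_trans (dist_le_sym (fund_nbhd_dist_le nc_bounded w_gt0 v1_w)) _.
  exact: fund_nbhd_dist_le nc_bounded w_gt0 v2_w.
Qed.
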